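(* Let $x>0$, $y>0$. (1) If $x\ge1$ and $y\ge1$, then $\Gamma(x,y)\ge\max\Big(\frac{\Gamma(x)}{y^{x}},\frac{\Gamma(y)}{x^{y}}\Big)$. (2) If $x\ge1$ and $0<y\le1$, then $\frac{\Gamma(y)}{x^{y}}\le\Gamma(x,y)\le\frac{\Gamma(x)}{y^{x}}$. (3) If $0<x\le1$ and $y\ge1$, then $\frac{\Gamma(x)}{y^{x}}\le\Gamma(x,y)\le\frac{\Gamma(y)}{x^{y}}$. (4) If $0<x\le1$ and $0<y\le1$, then $\Gamma(x,y)\le\min\Big(\frac{\Gamma(x)}{y^{x}},\frac{\Gamma(y)}{x^{y}}\Big)$.
   Context: For $x>0,y>0$ the Bigamma function is the (convergent) improper integral $\Gamma(x,y):=\int_0^1(-\ln t)^{x-1}\big(-\ln(1-t)\big)^{y-1}\,dt$. $\Gamma(x)$ (one argument) denotes Euler's gamma function. *)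

From Stdlib Require Import Reals.
From Coquelicot Require Import Coquelicot.
Open Scope R_scope.

Definition EulerGamma (x : R) : R :=
  RInt_gen (fun t => Rpower t (x - 1) * exp (- t)) (at_right 0) (Rbar_locally p_infty).

Definition Bigamma (x y : R) : R :=
  RInt_gen (fun t => Rpower (- ln t) (x - 1) * Rpower (- ln (1 - t)) (y - 1))
    (at_right 0) (at_left 1).

From Stdlib Require Import Reals Lra.
From Coquelicot Require Import Coquelicot.
Open Scope R_scope.

(* The substitution [s = -y ln t] turns [Gamma(x) / y^x] into the integral over [(0,1)] of
   [(-ln t)^(x-1) t^(y-1)], and the reflection [t |-> 1 - t] (which also shows
   [Bigamma x y = Bigamma y x]) turns [Gamma(y) / x^y] into that of
   [(1-t)^(x-1) (-ln(1-t))^(y-1)].  Each differs from the Bigamma integrand in one factor only,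
   where [t <= -ln(1-t)] (resp. [1-t <= -ln t]); raising to the power [y-1] (resp. [x-1])
   keeps or reverses this inequality according to the sign of the exponent, which gives the
   four cases.  As [-ln(1-t) <= 2t] near [0], the two substituted integrands also dominate the
   Bigamma integrand, so the improper integral defining [Bigamma] converges. *)

Definition dominated_on (f G : R -> R) (a b : R) : Prop :=
  ex_RInt f a b /\ ex_RInt G a b /\ forall z, Rmin a b <= z <= Rmax a b -> Rabs (f z) <= G z.

Lemma dominated_on_swap (f G : R -> R) (a b : R) : dominated_on f G a b -> dominated_on f G b a.
Proof.
  intros (If & IG & dom). repeat split; try now apply ex_RInt_swap.
  intros z Hz; apply dom. now rewrite Rmin_comm, Rmax_comm.
Qed.

Lemma segment_subset_union (p q r z : R) :
  Rmin p q <= z <= Rmax p q ->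
  Rmin p r <= z <= Rmax p r \/ Rmin q r <= z <= Rmax q r.
Proof.
  unfold Rmin, Rmax; intros Hz.
  destruct (Rle_dec p q), (Rle_dec p r), (Rle_dec q r), (Rle_dec z r).
  all: first [left; lra | right; lra].
Qed.

Lemma dominated_on_Chasles (f G : R -> R) (p q r : R) :
  dominated_on f G p r -> dominated_on f G q r -> dominated_on f G p q.
Proof.
  intros (fp & Gp & dom_p) (fq & Gq & dom_q).
  repeat split; try (apply ex_RInt_Chasles with r; auto; now apply ex_RInt_swap).
  intros z Hz. destruct (segment_subset_union p q r z Hz); auto.
Qed.

Lemma RInt_sub_Chasles (g : R -> R) (p q r : R) : ex_RInt g p r -> ex_RInt g q r ->
  RInt g p r - RInt g q r = RInt g p q.
Proof.
  intros gp gq.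
  assert (gpq : ex_RInt g p q) by (apply ex_RInt_Chasles with r; auto; now apply ex_RInt_swap).
  rewrite <- (RInt_Chasles g p q r gpq gq).
  change (RInt g p q + RInt g q r - RInt g q r = RInt g p q). ring.
Qed.

Lemma Rabs_RInt_dominated (f G : R -> R) (a b : R) :
  dominated_on f G a b -> Rabs (RInt f a b) <= Rabs (RInt G a b).
Proof.
  assert (ordered : forall a b, a <= b -> dominated_on f G a b ->
            Rabs (RInt f a b) <= Rabs (RInt G a b)).
  { intros a' b' ab (If & IG & dom). rewrite Rmin_left, Rmax_right in dom by exact ab.
    assert (HfG : forall z, a' < z < b' -> - G z <= f z <= G z)
      by (intros z Hz; apply Rabs_le_between, dom; lra).
    assert (lower : - RInt G a' b' <= RInt f a' b').
    { pose proof (RInt_opp G a' b' IG) as E.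
      change (RInt (fun z => - G z) a' b' = - RInt G a' b') in E.
      rewrite <- E. apply RInt_le; [exact ab | exact (ex_RInt_opp G a' b' IG) | exact If |].
      intros z Hz; apply HfG, Hz. }
    assert (upper : RInt f a' b' <= RInt G a' b').
    { apply RInt_le; [exact ab | exact If | exact IG |]. intros z Hz; apply HfG, Hz. }
    rewrite (Rabs_pos_eq (RInt G a' b')) by lra. apply Rabs_le; lra. }
  intros D. destruct (Rle_dec a b) as [ab | ba]; [now apply ordered |].
  destruct D as (If & IG & dom).
  rewrite <- (opp_RInt_swap f), <- (opp_RInt_swap G) by now apply ex_RInt_swap.
  change (Rabs (- RInt f b a) <= Rabs (- RInt G b a)); rewrite !Rabs_Ropp.
  apply ordered; [lra | now apply dominated_on_swap].
Qed.

(* Moving the endpoints from [(u, v)] to [(u', v')] one at a time changes [RInt f] by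
   integrals over [[u, u']] and [[v', v]], on which [|f| <= G]. *)
Lemma Rabs_RInt_sub_le_rectangle (f G : R -> R) (u v u' v' : R) :
  dominated_on f G u v -> dominated_on f G u' v -> dominated_on f G u' v' ->
  Rabs (RInt f u v - RInt f u' v') <=
  Rabs (RInt G u v - RInt G u' v) + Rabs (RInt G u' v - RInt G u' v').
Proof.
  intros Duv Du'v Du'v'.
  assert (Duu' : dominated_on f G u u') by exact (dominated_on_Chasles f G u u' v Duv Du'v).
  assert (Dv'v : dominated_on f G v' v)
    by exact (dominated_on_Chasles f G v' v u'
               (dominated_on_swap _ _ _ _ Du'v') (dominated_on_swap _ _ _ _ Du'v)).
  assert (split_ends : forall g, ex_RInt g u v -> ex_RInt g u' v -> ex_RInt g u' v' ->
            RInt g u v - RInt g u' v = RInt g u u' /\ RInt g u' v - RInt g u' v' = RInt g v' v).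
  { intros g g1 g2 g3. split; [now apply RInt_sub_Chasles |].
    rewrite <- (opp_RInt_swap g v u'), <- (opp_RInt_swap g v' u') by now apply ex_RInt_swap.
    rewrite <- (RInt_sub_Chasles g v' v u') by now apply ex_RInt_swap.
    change (- RInt g v u' - - RInt g v' u' = RInt g v' u' - RInt g v u'). ring. }
  destruct Duv as (fuv & Guv & _), Du'v as (fu'v & Gu'v & _), Du'v' as (fu'v' & Gu'v' & _).
  destruct (split_ends f fuv fu'v fu'v') as [Ef1 Ef2].
  destruct (split_ends G Guv Gu'v Gu'v') as [EG1 EG2].
  replace (RInt f u v - RInt f u' v')
    with ((RInt f u v - RInt f u' v) + (RInt f u' v - RInt f u' v')) by ring.
  rewrite Ef1, Ef2, EG1, EG2.
  eapply Rle_trans; [apply Rabs_triang | apply Rplus_le_compat; apply Rabs_RInt_dominated].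
  - exact Duu'.
  - exact Dv'v.
Qed.

Lemma ex_RInt_gen_dominated (Fa Fb : (R -> Prop) -> Prop)
  {PFa : ProperFilter Fa} {PFb : ProperFilter Fb} (f G : R -> R) (lG : R) :
  filter_prod Fa Fb (fun ab => forall z, Rmin (fst ab) (snd ab) <= z <= Rmax (fst ab) (snd ab) ->
    continuous f z /\ continuous G z /\ Rabs (f z) <= G z) ->
  is_RInt_gen G Fa Fb lG -> ex_RInt_gen f Fa Fb.
Proof.
  intros [Pa Pb HPa HPb Hdom] HG.
  assert (dom : forall u v, Pa u -> Pb v -> dominated_on f G u v).
  { intros u v Hu Hv. repeat split;
      try (apply (ex_RInt_continuous (V := R_CompleteNormedModule)); intros z Hz);
      now apply (Hdom u v Hu Hv). }
  assert (ProperFilter (filter_prod Fa Fb)) by (apply filter_prod_proper; auto).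
  assert (RInt_of : forall (g : R -> R) a b (y : R), is_RInt g a b y -> y = RInt g a b)
    by (intros g a b y Hy; symmetry; now apply (is_RInt_unique (V := R_CompleteNormedModule))).
  refine (proj1 (filterlimi_locally_cauchy (U := R_CompleteSpace) (F := filter_prod Fa Fb)
    (fun ab y => is_RInt f (fst ab) (snd ab) y) _) _).
  - apply Filter_prod with Pa Pb; auto. intros u v Hu Hv. split.
    + destruct (dom u v Hu Hv) as [[y Hy] _]. now exists y.
    + intros y1 y2 H1 H2. now rewrite (RInt_of _ _ _ _ H1), (RInt_of _ _ _ _ H2).
  - intros eps.
    assert (eps4 : 0 < eps / 4) by (destruct eps; simpl; lra).
    destruct (HG _ (locally_ball lG (mkposreal _ eps4))) as [Qa Qb HQa HQb HQ].
    assert (G_close : forall a b, Qa a -> Qb b -> Rabs (RInt G a b - lG) < eps / 4).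
    { intros a b Qa_a Qb_b. destruct (HQ a b Qa_a Qb_b) as [y [Hy close]].
      now rewrite <- (RInt_of G a b y Hy). }
    exists (fun ab => (Pa (fst ab) /\ Qa (fst ab)) /\ (Pb (snd ab) /\ Qb (snd ab))). split.
    + apply Filter_prod with (fun a => Pa a /\ Qa a) (fun b => Pb b /\ Qb b);
        try (now apply filter_and); auto.
    + intros [u v] [u' v'] [[Pu Qu] [Pv Qv]] [[Pu' Qu'] [Pv' Qv']] y1 y2 H1 H2; simpl in *.
      rewrite (RInt_of _ _ _ _ H1), (RInt_of _ _ _ _ H2).
      change (Rabs (RInt f u' v' - RInt f u v) < eps). rewrite Rabs_minus_sym.
      eapply Rle_lt_trans; [apply Rabs_RInt_sub_le_rectangle; auto |].
      pose proof (G_close u v Qu Qv) as c1. pose proof (G_close u' v Qu' Qv) as c2.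
      pose proof (G_close u' v' Qu' Qv') as c3.
      apply Rabs_def2 in c1. apply Rabs_def2 in c2. apply Rabs_def2 in c3.
      assert (Rabs (RInt G u v - RInt G u' v) < eps / 2) by (apply Rabs_def1; lra).
      assert (Rabs (RInt G u' v - RInt G u' v') < eps / 2) by (apply Rabs_def1; lra).
      lra.
Qed.

Lemma is_RInt_gen_derive (Fa Fb : (R -> Prop) -> Prop) {FFa : Filter Fa} {FFb : Filter Fb}
  (f F : R -> R) (la lb : R) :
  filter_prod Fa Fb (fun ab => forall z, Rmin (fst ab) (snd ab) <= z <= Rmax (fst ab) (snd ab) ->
    is_derive F z (f z) /\ continuous f z) ->
  filterlim F Fa (locally la) -> filterlim F Fb (locally lb) ->
  is_RInt_gen f Fa Fb (lb - la).
Proof.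
  intros HF Ha Hb P HP.
  assert (lim : filterlim (fun ab : R * R => plus (F (snd ab)) (opp (F (fst ab))))
                  (filter_prod Fa Fb) (locally (plus lb (opp la)))).
  { apply (filterlim_comp_2 (G := locally lb) (H := locally (opp la))
      (fun ab : R * R => F (snd ab)) (fun ab : R * R => opp (F (fst ab))) plus).
    - apply filterlim_comp with Fb; [apply filterlim_snd | exact Hb].
    - apply filterlim_comp with (locally la).
      + apply filterlim_comp with Fa; [apply filterlim_fst | exact Ha].
      + apply (filterlim_opp (V := R_NormedModule)).
    - exact (filterlim_plus (V := R_NormedModule) lb (opp la)). }
  assert (Hlim : filter_prod Fa Fb (fun ab => P (F (snd ab) - F (fst ab)))) by exact (lim P HP).
  unfold filtermapi. generalize (filter_and _ _ HF Hlim). apply filter_imp.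
  intros [a b] [Hd Pab]. exists (F b - F a). split; [| exact Pab].
  apply (is_RInt_derive (V := R_CompleteNormedModule) F f a b); intros z Hz; now apply Hd.
Qed.

Lemma is_RInt_gen_comp (Fa Fb Ga Gb : (R -> Prop) -> Prop) {FFa : Filter Fa} {FFb : Filter Fb}
  (f psi dpsi : R -> R) (l : R) :
  filter_prod Fa Fb (fun ab => forall z, Rmin (fst ab) (snd ab) <= z <= Rmax (fst ab) (snd ab) ->
    continuous f (psi z) /\ is_derive psi z (dpsi z) /\ continuous dpsi z) ->
  filterlim psi Fa Ga -> filterlim psi Fb Gb ->
  is_RInt_gen f Ga Gb l -> is_RInt_gen (fun t => dpsi t * f (psi t)) Fa Fb l.
Proof.
  intros Hreg Ha Hb Hf P HP.
  destruct (Hf P HP) as [Qa Qb HQa HQb HQ].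
  assert (Hpsi : filter_prod Fa Fb (fun ab => Qa (psi (fst ab)) /\ Qb (psi (snd ab))))
    by (apply Filter_prod with (fun a => Qa (psi a)) (fun b => Qb (psi b));
        [apply Ha, HQa | apply Hb, HQb | now split]).
  unfold filtermapi. generalize (filter_and _ _ Hreg Hpsi). apply filter_imp.
  intros [a b] [Hd [Qa_a Qb_b]]; simpl in *.
  destruct (HQ _ _ Qa_a Qb_b) as [y [Hy Py]]. exists y. split; [| exact Py].
  rewrite <- (is_RInt_unique (V := R_CompleteNormedModule) f _ _ y Hy).
  apply (is_RInt_comp (V := R_CompleteNormedModule) f psi dpsi a b);
    intros z Hz; destruct (Hd z Hz) as (? & ? & ?); auto.
Qed.

Lemma is_RInt_reflect (f : R -> R) (c a b l : R) :
  is_RInt f (c - b) (c - a) l -> is_RInt (fun t => f (c - t)) a b l.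
Proof.
  intros H.
  assert (H' : is_RInt f (-1 * a + c) (-1 * b + c) (opp l)).
  { replace (-1 * a + c) with (c - a) by ring. replace (-1 * b + c) with (c - b) by ring.
    exact (is_RInt_swap (V := R_NormedModule) f _ _ l H). }
  apply (is_RInt_comp_lin f (-1) c a b), (is_RInt_scal _ _ _ (-1)) in H'.
  replace l with (scal (-1) (opp l)) by (change (-1 * - l = l); ring).
  revert H'. apply is_RInt_ext. intros t _. change (-1 * (-1 * f (-1 * t + c)) = f (c - t)).
  replace (-1 * t + c) with (c - t) by ring. ring.
Qed.

Lemma is_RInt_gen_reflect (Fa Fb Ga Gb : (R -> Prop) -> Prop) {FFa : Filter Fa} {FFb : Filter Fb}
  (f : R -> R) (c l : R) :
  filterlim (fun t => c - t) Fa Gb -> filterlim (fun t => c - t) Fb Ga ->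
  is_RInt_gen f Ga Gb l -> is_RInt_gen (fun t => f (c - t)) Fa Fb l.
Proof.
  intros Ha Hb Hf P HP.
  destruct (Hf P HP) as [Qa Qb HQa HQb HQ].
  apply Filter_prod with (fun a => Qb (c - a)) (fun b => Qa (c - b));
    [apply Ha, HQb | apply Hb, HQa |].
  intros a b Qb_a Qa_b. destruct (HQ _ _ Qa_b Qb_a) as [y [Hy Py]].
  exists y. split; [now apply is_RInt_reflect | exact Py].
Qed.

Lemma at_right_interval (a : R) (d : posreal) (P : R -> Prop) :
  (forall u, a < u < a + d -> P u) -> at_right a P.
Proof.
  intros H. exists d. intros u Hu au. apply H.
  change (Rabs (u - a) < d) in Hu. apply Rabs_def2 in Hu. lra.
Qed.

Lemma at_left_interval (b : R) (d : posreal) (P : R -> Prop) :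
  (forall u, b - d < u < b -> P u) -> at_left b P.
Proof.
  intros H. exists d. intros u Hu ub. apply H.
  change (Rabs (u - b) < d) in Hu. apply Rabs_def2 in Hu. lra.
Qed.

Lemma filter_prod_open_interval (a b : R) (P : R -> Prop) : a < b ->
  (forall z, a < z < b -> P z) ->
  filter_prod (at_right a) (at_left b) (fun uv =>
    forall z, Rmin (fst uv) (snd uv) <= z <= Rmax (fst uv) (snd uv) -> P z).
Proof.
  intros ab HP. assert (d : 0 < b - a) by lra.
  apply Filter_prod with (fun u => a < u < b) (fun v => a < v < b).
  - apply (at_right_interval a (mkposreal _ d)); simpl; intros; lra.
  - apply (at_left_interval b (mkposreal _ d)); simpl; intros; lra.
  - intros u v Hu Hv z Hz; simpl in Hz. apply HP.
    unfold Rmin, Rmax in Hz. destruct (Rle_dec u v); lra.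
Qed.

Lemma is_RInt_gen_ext_open_interval (f g : R -> R) (a b l : R) : a < b ->
  (forall t, a < t < b -> f t = g t) ->
  is_RInt_gen f (at_right a) (at_left b) l -> is_RInt_gen g (at_right a) (at_left b) l.
Proof.
  intros ab Hfg. apply is_RInt_gen_ext.
  refine (filter_imp _ _ _ (filter_prod_open_interval a b _ ab Hfg)).
  intros uv H t Ht. apply H; lra.
Qed.

Lemma is_RInt_gen_le (f g : R -> R) (a b lf lg : R) : a < b ->
  is_RInt_gen f (at_right a) (at_left b) lf -> is_RInt_gen g (at_right a) (at_left b) lg ->
  (forall t, a < t < b -> 0 <= f t <= g t) -> lf <= lg.
Proof.
  intros ab Hf Hg Hfg.
  set (m := (a + b) / 2). assert (d : 0 < m - a) by (unfold m; lra).
  assert (rectangle : forall Q : R * R -> Prop, (forall u v, a < u < m -> m < v < b -> Q (u, v)) ->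
            filter_prod (at_right a) (at_left b) Q).
  { intros Q HQ. apply Filter_prod with (fun u => a < u < m) (fun v => m < v < b); auto.
    - apply (at_right_interval a (mkposreal _ d)); simpl; intros; lra.
    - apply (at_left_interval b (mkposreal _ d)); unfold m in *; simpl; intros; lra. }
  assert (N : norm lf <= lg).
  { apply (RInt_gen_norm (Fa := at_right a) (Fb := at_left b) f g lf lg); try exact _;
      [| | exact Hf | exact Hg]; apply rectangle; simpl; intros u v Hu Hv; [lra |].
    intros z Hz. specialize (Hfg z ltac:(lra)).
    change (Rabs (f z) <= g z). rewrite Rabs_pos_eq; lra. }
  change (Rabs lf <= lg) in N. pose proof (Rle_abs lf). lra.
Qed.

Lemma filterlim_at_point (F : R -> R) (b : R) : filterlim F (at_point b) (locally (F b)).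
Proof. intros P HP. exact (locally_singleton _ _ HP). Qed.

Lemma Rpower_pos (a c : R) : 0 < Rpower a c.
Proof. apply exp_pos. Qed.

Lemma Rle_Rpower_l_nonpos (a b c : R) : c <= 0 -> 0 < a <= b -> Rpower b c <= Rpower a c.
Proof.
  intros hc hab. rewrite <- (Ropp_involutive c), !(Rpower_Ropp _ (- c)).
  apply Rinv_le_contravar; [apply Rpower_pos |]. apply Rle_Rpower_l; lra.
Qed.

Lemma Rpower_sub_1 (t c : R) : 0 < t -> Rpower t (c - 1) = Rpower t c / t.
Proof.
  intros ht. unfold Rpower. replace ((c - 1) * ln t) with (c * ln t + - ln t) by ring.
  rewrite exp_plus, exp_Ropp, exp_ln; auto.
Qed.

(* From [v <= exp v] at [v = u / (2 b)], raised to the power [b]. *)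
Lemma Rpower_le_exp_half (b u : R) : 0 < b -> 0 < u ->
  Rpower u b <= Rpower (2 * b) b * exp (u / 2).
Proof.
  intros hb hu.
  assert (hv : 0 < u / (2 * b)) by (apply Rdiv_lt_0_compat; lra).
  assert (v_le : u / (2 * b) <= exp (u / (2 * b)))
    by (pose proof (exp_ineq1_le (u / (2 * b))); lra).
  replace (exp (u / 2)) with (Rpower (exp (u / (2 * b))) b)
    by (unfold Rpower; rewrite ln_exp; f_equal; field; lra).
  replace u with (2 * b * (u / (2 * b))) at 1 by (field; lra).
  rewrite <- Rpower_mult_distr by lra.
  apply Rmult_le_compat_l; [left; apply Rpower_pos |].
  now apply Rle_Rpower_l; [lra |].
Qed.

Lemma ln_le_sub_1 (z : R) : 0 < z -> ln z <= z - 1.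
Proof. intros hz. pose proof (exp_ineq1_le (ln z)). rewrite exp_ln in H; lra. Qed.

Lemma neg_ln_pos (t : R) : 0 < t < 1 -> 0 < - ln t.
Proof.
  intros ht. pose proof (ln_increasing t 1 (proj1 ht) (proj2 ht)) as H. rewrite ln_1 in H. lra.
Qed.

Lemma neg_ln_le (t : R) : 0 < t -> - ln t <= (1 - t) / t.
Proof.
  intros ht. pose proof (ln_le_sub_1 (/ t) (Rinv_0_lt_compat _ ht)) as H.
  rewrite ln_Rinv in H by exact ht. replace ((1 - t) / t) with (/ t - 1) by (field; lra). lra.
Qed.

Lemma le_neg_ln_1_sub (t : R) : t < 1 -> t <= - ln (1 - t).
Proof. intros ht. pose proof (ln_le_sub_1 (1 - t)). lra. Qed.

Lemma neg_ln_1_sub_le (t : R) : 0 <= t <= 1 / 2 -> - ln (1 - t) <= 2 * t.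
Proof.
  intros ht. pose proof (neg_ln_le (1 - t) ltac:(lra)) as H.
  assert ((1 - (1 - t)) / (1 - t) <= 2 * t).
  { apply Rmult_le_reg_r with (1 - t); [lra |]. field_simplify; nra. }
  lra.
Qed.

Lemma filterlim_Rpower_div_0 (a : R) : 0 < a ->
  filterlim (fun t => Rpower t a / a) (at_right 0) (locally 0).
Proof.
  intros ha P [eps Heps].
  assert (ea : 0 < eps * a) by (destruct eps; simpl; nra).
  apply (at_right_interval 0 (mkposreal _ (exp_pos (ln (eps * a) / a)))); simpl.
  intros u [hu0 hu]. rewrite Rplus_0_l in hu. apply Heps.
  change (Rabs (Rpower u a / a - 0) < eps).
  rewrite Rminus_0_r, Rabs_pos_eq by (left; apply Rdiv_lt_0_compat; [apply Rpower_pos | lra]).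
  assert (ln u < ln (eps * a) / a)
    by (rewrite <- (ln_exp (ln (eps * a) / a)); now apply ln_increasing).
  assert (Rpower u a < eps * a).
  { rewrite <- (exp_ln (eps * a)) by exact ea. apply exp_increasing.
    apply (Rmult_lt_compat_l a) in H; [| lra]. field_simplify in H; lra. }
  apply Rmult_lt_reg_r with a; [lra |]. field_simplify; lra.
Qed.

Lemma filterlim_exp_half_p_infty (C : R) :
  filterlim (fun t => C * exp (- t / 2)) (Rbar_locally p_infty) (locally 0).
Proof.
  intros P [eps Heps].
  set (K := Rabs C + 1). assert (hK : 0 < K) by (unfold K; pose proof (Rabs_pos C); lra).
  assert (heK : 0 < eps / K) by (destruct eps; simpl; apply Rdiv_lt_0_compat; lra).
  exists (- 2 * ln (eps / K)). intros t Ht. apply Heps.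
  change (Rabs (C * exp (- t / 2) - 0) < eps).
  rewrite Rminus_0_r, Rabs_mult, (Rabs_pos_eq (exp _)) by (left; apply exp_pos).
  assert (exp (- t / 2) < eps / K).
  { rewrite <- (exp_ln (eps / K)) by exact heK. apply exp_increasing. lra. }
  assert (Rabs C * exp (- t / 2) <= Rabs C * (eps / K))
    by (apply Rmult_le_compat_l; [apply Rabs_pos | lra]).
  assert (Rabs C * (eps / K) < eps).
  { apply Rmult_lt_reg_r with K; [exact hK |].
    replace (Rabs C * (eps / K) * K) with (Rabs C * eps) by (field; lra).
    destruct eps as [r hr]; unfold K; simpl. nra. }
  lra.
Qed.

Lemma filterlim_neg_ln_0 (c : R) : 0 < c ->
  filterlim (fun t => - c * ln t) (at_right 0) (Rbar_locally p_infty).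
Proof.
  intros hc P [M HM].
  apply (at_right_interval 0 (mkposreal _ (exp_pos (- M / c)))); simpl.
  intros u [hu0 hu]. rewrite Rplus_0_l in hu. apply HM.
  assert (ln u < - M / c) by (rewrite <- (ln_exp (- M / c)); now apply ln_increasing).
  apply (Rmult_lt_compat_l c) in H; [| exact hc]. field_simplify in H; lra.
Qed.

Lemma filterlim_neg_ln_1 (c : R) : 0 < c ->
  filterlim (fun t => - c * ln t) (at_left 1) (at_right 0).
Proof.
  intros hc P [eps Heps].
  assert (hd : 0 < Rmin (1 / 2) (eps / (4 * c)))
    by (apply Rmin_pos; [lra | apply Rdiv_lt_0_compat; [destruct eps; simpl |]; lra]).
  apply (at_left_interval 1 (mkposreal _ hd)); simpl. intros u [hu hu1].
  pose proof (Rmin_l (1 / 2) (eps / (4 * c))). pose proof (Rmin_r (1 / 2) (eps / (4 * c))).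
  pose proof (neg_ln_pos u ltac:(lra)). pose proof (neg_ln_le u ltac:(lra)).
  assert ((1 - u) / u <= 2 * (1 - u)).
  { apply Rmult_le_reg_r with u; [lra |]. field_simplify; nra. }
  assert (4 * c * (1 - u) < eps).
  { replace (pos eps) with (4 * c * (eps / (4 * c))) by (field; lra).
    apply Rmult_lt_compat_l; lra. }
  apply Heps; [| nra].
  change (Rabs (- c * ln u - 0) < eps). rewrite Rminus_0_r, Rabs_pos_eq by nra. nra.
Qed.

Lemma ex_derive_continuous_R (f : R -> R) (z : R) : ex_derive f z -> continuous f z.
Proof. apply (ex_derive_continuous (K := R_AbsRing) (V := R_NormedModule)). Qed.

Definition gamma_integrand (a t : R) : R := Rpower t (a - 1) * exp (- t).

Lemma continuous_gamma_integrand (a t : R) : 0 < t -> continuous (gamma_integrand a) t.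
Proof.
  intros ht. apply ex_derive_continuous_R. unfold gamma_integrand, Rpower. auto_derive. lra.
Qed.

Lemma gamma_integrand_nonneg (a t : R) : 0 <= gamma_integrand a t.
Proof. apply Rmult_le_pos; left; [apply Rpower_pos | apply exp_pos]. Qed.

Lemma ex_RInt_gen_gamma_integrand_0_1 (a : R) : 0 < a ->
  ex_RInt_gen (gamma_integrand a) (at_right 0) (at_point 1).
Proof.
  intros ha.
  assert (on_segment : forall Q : R -> Prop, (forall z, 0 < z <= 1 -> Q z) ->
            filter_prod (at_right 0) (at_point 1) (fun uv =>
              forall z, Rmin (fst uv) (snd uv) <= z <= Rmax (fst uv) (snd uv) -> Q z)).
  { intros Q HQ. apply Filter_prod with (fun u => 0 < u < 1) (fun v => v = 1); [| easy |].
    - apply (at_right_interval 0 (mkposreal 1 Rlt_0_1)); simpl; intros; lra.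
    - intros u v hu -> z Hz; simpl in Hz. apply HQ.
      rewrite Rmin_left, Rmax_right in Hz; lra. }
  assert (majorant : is_RInt_gen (fun t => Rpower t (a - 1)) (at_right 0) (at_point 1)
                       (Rpower 1 a / a - 0)).
  { apply (is_RInt_gen_derive (at_right 0) (at_point 1) _ (fun t => Rpower t a / a));
      [| apply filterlim_Rpower_div_0, ha | exact (filterlim_at_point _ 1)].
    apply on_segment. intros z hz. split.
    - unfold Rpower. auto_derive; [lra |].
      change (exp ((a - 1) * ln z)) with (Rpower z (a - 1)).
      rewrite Rpower_sub_1 by lra. unfold Rpower. field. lra.
    - apply ex_derive_continuous_R. unfold Rpower. auto_derive. lra. }
  refine (ex_RInt_gen_dominated _ _ _ _ _ (on_segment _ _) majorant).
  intros z hz. split; [| split].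
  - apply continuous_gamma_integrand; lra.
  - apply ex_derive_continuous_R. unfold Rpower. auto_derive. lra.
  - rewrite Rabs_pos_eq by apply gamma_integrand_nonneg. unfold gamma_integrand.
    rewrite <- (Rmult_1_r (Rpower z (a - 1))) at 2.
    apply Rmult_le_compat_l; [left; apply Rpower_pos |].
    left; rewrite <- exp_0; apply exp_increasing; lra.
Qed.

Lemma ex_RInt_gen_gamma_integrand_1_p_infty (a : R) :
  ex_RInt_gen (gamma_integrand a) (at_point 1) (Rbar_locally p_infty).
Proof.
  set (b := Rabs (a - 1) + 1).
  assert (hb : 0 < b) by (unfold b; pose proof (Rabs_pos (a - 1)); lra).
  set (C := Rpower (2 * b) b).
  assert (on_segment : forall Q : R -> Prop, (forall z, 1 <= z -> Q z) ->
            filter_prod (at_point 1) (Rbar_locally p_infty) (fun uv =>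
              forall z, Rmin (fst uv) (snd uv) <= z <= Rmax (fst uv) (snd uv) -> Q z)).
  { intros Q HQ. apply Filter_prod with (fun u => u = 1) (fun v => 1 < v); [easy | now exists 1 |].
    intros u v -> hv z Hz; simpl in Hz. apply HQ.
    rewrite Rmin_left, Rmax_right in Hz; lra. }
  assert (majorant : is_RInt_gen (fun t => C * exp (- t / 2)) (at_point 1) (Rbar_locally p_infty)
                       (0 - (- 2 * C) * exp (- 1 / 2))).
  { apply (is_RInt_gen_derive (at_point 1) (Rbar_locally p_infty) _
             (fun t => (- 2 * C) * exp (- t / 2)));
      [| exact (filterlim_at_point _ 1) | apply filterlim_exp_half_p_infty].
    apply on_segment. intros z hz. split.
    - auto_derive; [easy |]. change (- z * / 2) with (- z / 2). field.
    - apply ex_derive_continuous_R. auto_derive. easy. }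
  refine (ex_RInt_gen_dominated _ _ _ _ _ (on_segment _ _) majorant).
  intros z hz. split; [| split].
  - apply continuous_gamma_integrand; lra.
  - apply ex_derive_continuous_R. auto_derive. easy.
  - rewrite Rabs_pos_eq by apply gamma_integrand_nonneg. unfold gamma_integrand.
    assert (Rpower z (a - 1) <= Rpower z b)
      by (apply Rle_Rpower; [lra |]; unfold b; pose proof (Rle_abs (a - 1)); lra).
    pose proof (Rpower_le_exp_half b z hb ltac:(lra)) as Hexp. fold C in Hexp.
    replace (C * exp (- z / 2)) with (C * exp (z / 2) * exp (- z))
      by (rewrite Rmult_assoc, <- exp_plus; do 2 f_equal; field).
    apply Rmult_le_compat_r; [left; apply exp_pos | lra].
Qed.

Lemma is_RInt_gen_EulerGamma (a : R) : 0 < a ->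
  is_RInt_gen (gamma_integrand a) (at_right 0) (Rbar_locally p_infty) (EulerGamma a).
Proof.
  intros ha.
  destruct (ex_RInt_gen_gamma_integrand_0_1 a ha) as [l1 H1].
  destruct (ex_RInt_gen_gamma_integrand_1_p_infty a) as [l2 H2].
  pose proof (is_RInt_gen_Chasles _ _ _ _ H1 H2) as H.
  unfold EulerGamma. fold (gamma_integrand a).
  now rewrite (is_RInt_gen_unique _ _ H).
Qed.

Definition gamma_log_integrand (x y t : R) : R := Rpower (- ln t) (x - 1) * Rpower t (y - 1).

Definition bigamma_integrand (x y t : R) : R :=
  Rpower (- ln t) (x - 1) * Rpower (- ln (1 - t)) (y - 1).

Lemma gamma_log_integrand_pos (x y t : R) : 0 < gamma_log_integrand x y t.
Proof. apply Rmult_lt_0_compat; apply Rpower_pos. Qed.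

Lemma bigamma_integrand_pos (x y t : R) : 0 < bigamma_integrand x y t.
Proof. apply Rmult_lt_0_compat; apply Rpower_pos. Qed.

Lemma continuous_gamma_log_integrand (x y t : R) : 0 < t < 1 ->
  continuous (gamma_log_integrand x y) t.
Proof.
  intros ht. pose proof (neg_ln_pos t ht).
  apply ex_derive_continuous_R. unfold gamma_log_integrand, Rpower. auto_derive. lra.
Qed.

Lemma continuous_bigamma_integrand (x y t : R) : 0 < t < 1 ->
  continuous (bigamma_integrand x y) t.
Proof.
  intros ht. pose proof (neg_ln_pos t ht). pose proof (neg_ln_pos (1 - t) ltac:(lra)).
  apply ex_derive_continuous_R. unfold bigamma_integrand, Rpower.
  auto_derive. replace (1 + - t) with (1 - t) by ring. lra.
Qed.

Lemma gamma_integrand_neg_scal_ln (x y t : R) : 0 < y -> 0 < t < 1 ->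
  y / t * gamma_integrand x (- y * ln t) = Rpower y x * gamma_log_integrand x y t.
Proof.
  intros hy ht. pose proof (neg_ln_pos t ht).
  unfold gamma_integrand, gamma_log_integrand.
  replace (- y * ln t) with (y * - ln t) by ring.
  rewrite <- Rpower_mult_distr, (Rpower_sub_1 y x), (Rpower_sub_1 t y) by lra.
  replace (- (y * - ln t)) with (y * ln t) by ring. change (exp (y * ln t)) with (Rpower t y).
  field. lra.
Qed.

Lemma is_RInt_gen_gamma_log_integrand (x y : R) : 0 < x -> 0 < y ->
  is_RInt_gen (gamma_log_integrand x y) (at_right 0) (at_left 1) (EulerGamma x / Rpower y x).
Proof.
  intros hx hy.
  assert (subst : is_RInt_gen (fun t => (- y / t) * gamma_integrand x (- y * ln t))
                    (at_right 0) (at_left 1) (- EulerGamma x)).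
  { apply (is_RInt_gen_comp _ _ (Rbar_locally p_infty) (at_right 0));
      [| apply filterlim_neg_ln_0, hy | apply filterlim_neg_ln_1, hy
       | exact (is_RInt_gen_swap (V := R_NormedModule) _ _ (is_RInt_gen_EulerGamma x hx))].
    apply filter_prod_open_interval; [lra |]. intros z hz. split; [| split].
    - apply continuous_gamma_integrand. pose proof (neg_ln_pos z hz). nra.
    - auto_derive; [lra |]. field. lra.
    - apply ex_derive_continuous_R. auto_derive. lra. }
  assert (hyx : Rpower y x <> 0) by apply Rgt_not_eq, Rpower_pos.
  apply (is_RInt_gen_scal _ (- / Rpower y x)) in subst.
  replace (EulerGamma x / Rpower y x) with (scal (- / Rpower y x) (- EulerGamma x))
    by (change (- / Rpower y x * - EulerGamma x = EulerGamma x / Rpower y x); now field).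
  revert subst. apply is_RInt_gen_ext_open_interval; [lra |]. intros t ht.
  change (- / Rpower y x * (- y / t * gamma_integrand x (- y * ln t)) = gamma_log_integrand x y t).
  replace (- / Rpower y x * (- y / t * gamma_integrand x (- y * ln t)))
    with (/ Rpower y x * (y / t * gamma_integrand x (- y * ln t))) by (field; split; lra).
  rewrite gamma_integrand_neg_scal_ln by lra. now field.
Qed.

Lemma filterlim_1_sub_at_right_0 : filterlim (fun t => 1 - t) (at_right 0) (at_left 1).
Proof.
  intros P [eps Heps]. apply (at_right_interval 0 eps). intros u hu.
  apply Heps; [| lra]. change (Rabs (1 - u - 1) < eps). rewrite Rabs_left; lra.
Qed.

Lemma filterlim_1_sub_at_left_1 : filterlim (fun t => 1 - t) (at_left 1) (at_right 0).
Proof.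
  intros P [eps Heps]. apply (at_left_interval 1 eps). intros u hu.
  apply Heps; [| lra]. change (Rabs (1 - u - 0) < eps). rewrite Rabs_pos_eq; lra.
Qed.

Lemma is_RInt_gen_reflect_0_1 (f : R -> R) (l : R) :
  is_RInt_gen f (at_right 0) (at_left 1) l ->
  is_RInt_gen (fun t => f (1 - t)) (at_right 0) (at_left 1) l.
Proof.
  apply (is_RInt_gen_reflect (at_right 0) (at_left 1) (at_right 0) (at_left 1));
    [apply filterlim_1_sub_at_right_0 | apply filterlim_1_sub_at_left_1].
Qed.

Lemma bigamma_integrand_reflect (x y t : R) :
  bigamma_integrand x y (1 - t) = bigamma_integrand y x t.
Proof.
  unfold bigamma_integrand. replace (1 - (1 - t)) with t by ring. apply Rmult_comm.
Qed.

Lemma Rpower_le_of_between_double (s t c : R) : 0 < t -> t <= s <= 2 * t ->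
  Rpower s c <= (1 + Rpower 2 c) * Rpower t c.
Proof.
  intros ht hs. pose proof (Rpower_pos t c). pose proof (Rpower_pos 2 c).
  destruct (Rle_dec 0 c) as [hc | hc].
  - assert (Rpower s c <= Rpower (2 * t) c) by (apply Rle_Rpower_l; lra).
    rewrite <- Rpower_mult_distr in H1 by lra. nra.
  - assert (Rpower s c <= Rpower t c) by (apply Rle_Rpower_l_nonpos; lra). nra.
Qed.

Lemma bigamma_integrand_le_left (x y t : R) : 0 < t <= 1 / 2 ->
  bigamma_integrand x y t <= (1 + Rpower 2 (y - 1)) * gamma_log_integrand x y t.
Proof.
  intros ht. unfold bigamma_integrand, gamma_log_integrand.
  assert (Rpower (- ln (1 - t)) (y - 1) <= (1 + Rpower 2 (y - 1)) * Rpower t (y - 1)).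
  { apply Rpower_le_of_between_double; [lra |].
    split; [apply le_neg_ln_1_sub | apply neg_ln_1_sub_le]; lra. }
  apply (Rmult_le_compat_l (Rpower (- ln t) (x - 1))) in H; [lra | left; apply Rpower_pos].
Qed.

(* Near [0] the factor [(-ln(1-t))^(y-1)] behaves like [t^(y-1)], near [1] symmetrically. *)
Lemma bigamma_integrand_le (x y t : R) : 0 < t < 1 ->
  bigamma_integrand x y t <=
  (1 + Rpower 2 (y - 1)) * gamma_log_integrand x y t
  + (1 + Rpower 2 (x - 1)) * gamma_log_integrand y x (1 - t).
Proof.
  intros ht.
  assert (weight_pos : forall c, 0 < 1 + Rpower 2 c)
    by (intros c; pose proof (Rpower_pos 2 c); lra).
  assert (0 <= (1 + Rpower 2 (y - 1)) * gamma_log_integrand x y t)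
    by (apply Rmult_le_pos; left; [apply weight_pos | apply gamma_log_integrand_pos]).
  assert (0 <= (1 + Rpower 2 (x - 1)) * gamma_log_integrand y x (1 - t))
    by (apply Rmult_le_pos; left; [apply weight_pos | apply gamma_log_integrand_pos]).
  destruct (Rle_dec t (1 / 2)).
  - pose proof (bigamma_integrand_le_left x y t ltac:(lra)). lra.
  - rewrite <- bigamma_integrand_reflect.
    pose proof (bigamma_integrand_le_left y x (1 - t) ltac:(lra)). lra.
Qed.

Lemma is_RInt_gen_Bigamma (x y : R) : 0 < x -> 0 < y ->
  is_RInt_gen (bigamma_integrand x y) (at_right 0) (at_left 1) (Bigamma x y).
Proof.
  intros hx hy.
  set (G := fun t => (1 + Rpower 2 (y - 1)) * gamma_log_integrand x y t
                     + (1 + Rpower 2 (x - 1)) * gamma_log_integrand y x (1 - t)).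
  assert (majorant : is_RInt_gen G (at_right 0) (at_left 1)
    ((1 + Rpower 2 (y - 1)) * (EulerGamma x / Rpower y x)
     + (1 + Rpower 2 (x - 1)) * (EulerGamma y / Rpower x y))).
  { apply (is_RInt_gen_plus (V := R_NormedModule)); apply (is_RInt_gen_scal (V := R_NormedModule));
      [| apply is_RInt_gen_reflect_0_1]; now apply is_RInt_gen_gamma_log_integrand. }
  assert (conv : ex_RInt_gen (bigamma_integrand x y) (at_right 0) (at_left 1)).
  { refine (ex_RInt_gen_dominated _ _ _ _ _ (filter_prod_open_interval 0 1 _ Rlt_0_1 _) majorant).
    intros t ht. split; [| split].
    - now apply continuous_bigamma_integrand.
    - apply (continuous_plus (V := R_NormedModule));
        apply (continuous_scal_r (V := R_NormedModule)).
      + now apply continuous_gamma_log_integrand.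
      + apply (continuous_comp (fun s => 1 - s)).
        * apply (continuous_minus (V := R_NormedModule));
            [apply continuous_const | apply continuous_id].
        * apply continuous_gamma_log_integrand; lra.
    - rewrite Rabs_pos_eq by (left; apply bigamma_integrand_pos). now apply bigamma_integrand_le. }
  destruct conv as [l Hl]. unfold Bigamma. fold (bigamma_integrand x y).
  now rewrite (is_RInt_gen_unique _ _ Hl).
Qed.

Lemma Bigamma_sym (x y : R) : 0 < x -> 0 < y -> Bigamma x y = Bigamma y x.
Proof.
  intros hx hy.
  pose proof (is_RInt_gen_Bigamma x y hx hy) as Hxy.
  assert (Hyx : is_RInt_gen (bigamma_integrand x y) (at_right 0) (at_left 1) (Bigamma y x)).
  { apply (is_RInt_gen_ext_open_interval (fun t => bigamma_integrand y x (1 - t))); [lra | |].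
    - intros t _. apply bigamma_integrand_reflect.
    - now apply is_RInt_gen_reflect_0_1, is_RInt_gen_Bigamma. }
  now rewrite <- (is_RInt_gen_unique _ _ Hxy), <- (is_RInt_gen_unique _ _ Hyx).
Qed.

Lemma EulerGamma_div_le_Bigamma (x y : R) : 0 < x -> 1 <= y ->
  EulerGamma x / Rpower y x <= Bigamma x y.
Proof.
  intros hx hy.
  apply (is_RInt_gen_le (gamma_log_integrand x y) (bigamma_integrand x y) 0 1); [lra | | |].
  - apply is_RInt_gen_gamma_log_integrand; lra.
  - apply is_RInt_gen_Bigamma; lra.
  - intros t ht. split; [left; apply gamma_log_integrand_pos |].
    apply Rmult_le_compat_l; [left; apply Rpower_pos |].
    apply Rle_Rpower_l; [lra |]. split; [lra | apply le_neg_ln_1_sub; lra].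
Qed.

Lemma Bigamma_le_EulerGamma_div (x y : R) : 0 < x -> 0 < y -> y <= 1 ->
  Bigamma x y <= EulerGamma x / Rpower y x.
Proof.
  intros hx hy hy1.
  apply (is_RInt_gen_le (bigamma_integrand x y) (gamma_log_integrand x y) 0 1); [lra | | |].
  - now apply is_RInt_gen_Bigamma.
  - now apply is_RInt_gen_gamma_log_integrand.
  - intros t ht. split; [left; apply bigamma_integrand_pos |].
    apply Rmult_le_compat_l; [left; apply Rpower_pos |].
    apply Rle_Rpower_l_nonpos; [lra |]. split; [lra | apply le_neg_ln_1_sub; lra].
Qed.

Theorem mainTheorem6 (x y : R) (hx : 0 < x) (hy : 0 < y) :
  (1 <= x -> 1 <= y ->
     Bigamma x y >= Rmax (EulerGamma x / Rpower y x) (EulerGamma y / Rpower x y)) /\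
  (1 <= x -> y <= 1 ->
     EulerGamma y / Rpower x y <= Bigamma x y <= EulerGamma x / Rpower y x) /\
  (x <= 1 -> 1 <= y ->
     EulerGamma x / Rpower y x <= Bigamma x y <= EulerGamma y / Rpower x y) /\
  (x <= 1 -> y <= 1 ->
     Bigamma x y <= Rmin (EulerGamma x / Rpower y x) (EulerGamma y / Rpower x y)).
Proof.
  pose proof (Bigamma_sym x y hx hy) as sym.
  pose proof (EulerGamma_div_le_Bigamma x y hx) as lower_y.
  pose proof (Bigamma_le_EulerGamma_div x y hx hy) as upper_y.
  pose proof (EulerGamma_div_le_Bigamma y x hy) as lower_x.
  pose proof (Bigamma_le_EulerGamma_div y x hy hx) as upper_x.
  rewrite <- sym in lower_x, upper_x.
  split; [| split; [| split]]; intros.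
  - apply Rle_ge, Rmax_lub; auto.
  - split; auto.
  - split; auto.
  - apply Rmin_glb; auto.
Qed.
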